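(* Let $(X,\varphi)$ be a Smale space, $(Y,f)$ a finitely presented system, and $\pi:X\to Y$ an almost one-to-one $u$-resolving factor map. Let $P\subseteq Y$ be a finite set of synchronizing periodic points such that $\pi^{-1}(p)$ is a single point for each $p\in P$, and let $Q=\pi^{-1}(P)$. Then for each $y\in Y^u(P)$, $\pi^{-1}(y)=\{x\}$ for some $x\in X^u(Q)$ (i.e. $y$ has a unique preimage under $\pi:X\to Y$, and it lies in $X^u(Q)$).
   Context: Dynamical systems are compact metric spaces with homeomorphisms. Expansive: some $\varepsilon_X>0$ with $d(\varphi^nx,\varphi^ny)\le\varepsilon_X$ for all $n\in\mathbb{Z}$ implying $x=y$. A Smale space is a system equipped with a bracket map satisfying Ruelle's axioms; a finitely presented system is an expansive factor of a shift of finite type. Factor map: continuous surjection intertwining the homeomorphisms. $x\sim_u y$ iff $d(\varphi^{-n}x,\varphi^{-n}y)\to0$ as $n\to\infty$; $X^u(x)$ is the class of $x$ and $X^u(P)=\bigcup_{p\in P}X^u(p)$. $\pi$ is $u$-resolving if it is injective on each $X^u(x)$, almost one-to-one if a residual set of points has a unique preimage. A point $y$ is synchronizing if it has a local product neighbourhood: for some $\delta>0$ the bracket ($[a,b]$ = unique point of $Y^s(a,\varepsilon)\cap Y^u(b,\varepsilon)$, where $Y^s(a,\varepsilon)=\{z:d(f^na,f^nz)<\varepsilon\ \forall n\ge0\}$ and $Y^u$ likewise with $f^{-n}$) maps $Y^u(y,\delta)\times Y^s(y,\delta)$ homeomorphically onto an open neighbourhood of $y$. *)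

From Stdlib Require Import Reals List ZArith Lia Lra.
Open Scope R_scope.

Record cms := CMS {
  pt :> Type;
  dist : pt -> pt -> R;
  dist_nonneg : forall x y, 0 <= dist x y;
  dist_eq0 : forall x y, dist x y = 0 <-> x = y;
  dist_sym : forall x y, dist x y = dist y x;
  dist_tri : forall x y z, dist x z <= dist x y + dist y z;
  (* compactness (for metric spaces: sequential compactness) *)
  seq_compact : forall u : nat -> pt, exists (s : nat -> nat) (l : pt),
      (forall k, (s k < s (S k))%nat) /\
      (forall e, e > 0 -> exists N, forall k, (N <= k)%nat -> dist (u (s k)) l < e)
}.
Arguments dist {c} _ _.

Definition continuous_map {X Y : cms} (g : X -> Y) : Prop :=
  forall x e, e > 0 -> exists d, d > 0 /\
    forall x', dist x x' < d -> dist (g x) (g x') < e.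

Record dynsys := DS {
  sp :> cms;
  hom : sp -> sp;
  hinv : sp -> sp;
  hinv_hom : forall x, hinv (hom x) = x;
  hom_hinv : forall x, hom (hinv x) = x;
  hom_cont : continuous_map hom;
  hinv_cont : continuous_map hinv
}.
Arguments hom {d} _.
Arguments hinv {d} _.

Definition fw {X : dynsys} (n : nat) (x : X) : X := Nat.iter n hom x.
Definition bw {X : dynsys} (n : nat) (x : X) : X := Nat.iter n hinv x.

Definition expansive_const (X : dynsys) (e : R) : Prop :=
  e > 0 /\ forall x y : X,
    (forall n, dist (fw n x) (fw n y) <= e /\ dist (bw n x) (bw n y) <= e) -> x = y.

Definition expansive (X : dynsys) : Prop := exists e, expansive_const X e.

Record smale_structure (X : dynsys) := SmaleStr {
  sm_eps : R;
  sm_lam : R;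
  sm_br : X -> X -> X;
  sm_eps_pos : sm_eps > 0;
  sm_lam_range : 0 < sm_lam < 1;
  sm_br_cont : forall x y e, dist x y <= sm_eps -> e > 0 -> exists d, d > 0 /\
      forall x' y', dist x' y' <= sm_eps -> dist x x' < d -> dist y y' < d ->
        dist (sm_br x y) (sm_br x' y') < e;
  sm_B1 : forall x, sm_br x x = x;
  sm_B2 : forall x y z, dist y z <= sm_eps -> dist x (sm_br y z) <= sm_eps ->
      dist x z <= sm_eps -> sm_br x (sm_br y z) = sm_br x z;
  sm_B3 : forall x y z, dist x y <= sm_eps -> dist (sm_br x y) z <= sm_eps ->
      dist x z <= sm_eps -> sm_br (sm_br x y) z = sm_br x z;
  sm_B4 : forall x y, dist x y <= sm_eps -> dist (hom x) (hom y) <= sm_eps ->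
      hom (sm_br x y) = sm_br (hom x) (hom y);
  sm_C1 : forall x y, dist x y <= sm_eps -> sm_br x y = y ->
      dist (hom x) (hom y) <= sm_lam * dist x y;
  sm_C2 : forall x y, dist x y <= sm_eps -> sm_br x y = x ->
      dist (hinv x) (hinv y) <= sm_lam * dist x y
}.

Definition smale_space (X : dynsys) : Prop := exists _ : smale_structure X, True.

(** an SFT over the alphabet {0,..,alph-1}: bi-infinite sequences all of whose
    windows of length win+1 are allowed words *)
Record sft := SFT { alph : nat; win : nat; allowed : list nat -> Prop }.

Definition in_sft (Sg : sft) (x : Z -> nat) : Prop :=
  (forall i, (x i < alph Sg)%nat) /\
  (forall i, allowed Sg (map (fun k => x (i + Z.of_nat k)%Z) (seq 0 (S (win Sg))))).

Definition shift (x : Z -> nat) : Z -> nat := fun i => x (i + 1)%Z.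

(** psi : Sigma_S -> Y is a factor map (continuous for the product topology,
    surjective, intertwining the shift with f) *)
Definition sft_factor (Sg : sft) (Y : dynsys) (psi : (Z -> nat) -> Y) : Prop :=
  (forall x, in_sft Sg x -> psi (shift x) = hom (psi x)) /\
  (forall y : Y, exists x, in_sft Sg x /\ psi x = y) /\
  (forall x, in_sft Sg x -> forall e, e > 0 -> exists N : nat, forall x', in_sft Sg x' ->
      (forall i, (- Z.of_nat N <= i <= Z.of_nat N)%Z -> x' i = x i) ->
      dist (psi x) (psi x') < e).

Definition finitely_presented (Y : dynsys) : Prop :=
  expansive Y /\ exists (Sg : sft) (psi : (Z -> nat) -> Y), sft_factor Sg Y psi.

Definition factor_map {X Y : dynsys} (pi : X -> Y) : Prop :=
  continuous_map pi /\ (forall y : Y, exists x, pi x = y) /\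
  (forall x, pi (hom x) = hom (pi x)).

Definition unst_eq {X : dynsys} (x y : X) : Prop :=
  forall e, e > 0 -> exists N, forall n, (N <= n)%nat -> dist (bw n x) (bw n y) < e.

Definition u_resolving {X Y : dynsys} (pi : X -> Y) : Prop :=
  forall x x' : X, unst_eq x x' -> pi x = pi x' -> x = x'.

Definition open_set {X : cms} (U : X -> Prop) : Prop :=
  forall x, U x -> exists r, r > 0 /\ forall z, dist x z < r -> U z.

Definition dense_set {X : cms} (U : X -> Prop) : Prop :=
  forall x r, r > 0 -> exists z, U z /\ dist x z < r.

(** almost one-to-one: a residual set (containing a countable intersection of
    dense open sets) of points of Y have a unique preimage *)
Definition almost_one_to_one {X Y : dynsys} (pi : X -> Y) : Prop :=
  exists U : nat -> Y -> Prop, (forall k, open_set (U k) /\ dense_set (U k)) /\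
    forall y, (forall k, U k y) -> exists x, forall x', pi x' = y <-> x' = x.

Definition loc_s {X : dynsys} (a : X) (e : R) (z : X) : Prop :=
  forall n, dist (fw n a) (fw n z) < e.
Definition loc_u {X : dynsys} (a : X) (e : R) (z : X) : Prop :=
  forall n, dist (bw n a) (bw n z) < e.

(** The bracket [a,b] is the
    unique point of Y^s(a,eps) ∩ Y^u(b,eps), for a small eps (2*eps an expansive
    constant); (a,b) |-> [a,b] maps Y^u(y,delta) x Y^s(y,delta) homeomorphically
    onto an open neighbourhood of y. *)
Definition synchronizing {Y : dynsys} (y : Y) : Prop :=
  exists (eps delta : R) (g : Y -> Y -> Y),
    eps > 0 /\ delta > 0 /\ expansive_const Y (2 * eps) /\
    let D := fun a b => loc_u y delta a /\ loc_s y delta b in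
    let U := fun z => exists a b, D a b /\ g a b = z in
    (forall a b, D a b ->
       loc_s a eps (g a b) /\ loc_u b eps (g a b) /\
       (forall z, loc_s a eps z -> loc_u b eps z -> z = g a b)) /\
    (forall a b e, D a b -> e > 0 -> exists d, d > 0 /\
       forall a' b', D a' b' -> dist a a' < d -> dist b b' < d ->
         dist (g a b) (g a' b') < e) /\
    (forall a b a' b', D a b -> D a' b' -> g a b = g a' b' -> a = a' /\ b = b') /\
    (forall a b e, D a b -> e > 0 -> exists d, d > 0 /\
       forall a' b', D a' b' -> dist (g a b) (g a' b') < d ->
         dist a a' < e /\ dist b b' < e) /\
    open_set U /\ U y.

Definition periodic {Y : dynsys} (p : Y) : Prop :=
  exists n, (n > 0)%nat /\ fw n p = p.

From Pilot Require Import Defs.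
From Stdlib Require Import Reals List.
From Stdlib Require Import Lra Lia Classical IndefiniteDescription.
Import Defs. (* re-exposes [Defs.dist], shadowed by the [dist] of [Reals] *)
Open Scope R_scope.

(* Let p be a periodic point of period n whose fibre is {q}, and let pi x be
   unstably equivalent to p.  By compactness, every limit point of the
   backward orbit x, phi^{-n} x, phi^{-2n} x, ... lies in the fibre of p, so
   this subsequence converges to q; continuity of the first n backward
   iterates at q then gives x ~u q.  Hence every preimage of y is unstably
   equivalent to q, and since pi is u-resolving, any two of them coincide. *)

Definition seq_cvg {X : cms} (u : nat -> X) (l : X) : Prop :=
  forall e, e > 0 -> exists N, forall k, (N <= k)%nat -> dist (u k) l < e.

Lemma dist_eq_of_lt_all {X : cms} (a b : X) :
  (forall e, e > 0 -> dist a b < e) -> a = b.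
Proof.
  intro small. apply dist_eq0.
  destruct (Req_dec (dist a b) 0) as [h0 | hne]; [exact h0 |].
  pose proof (dist_nonneg X a b).
  specialize (small (dist a b)). lra.
Qed.

Lemma strict_incr_ge_id (s : nat -> nat) :
  (forall k, (s k < s (S k))%nat) -> forall k, (k <= s k)%nat.
Proof. intros incr k; induction k; [lia | specialize (incr k); lia]. Qed.

Lemma seq_cvg_of_unique_limit_point {X : cms} (u : nat -> X) (q : X) :
  (forall (s : nat -> nat) l, (forall k, (k <= s k)%nat) ->
     seq_cvg (fun k => u (s k)) l -> l = q) ->
  seq_cvg u q.
Proof.
  intros unique e he. apply NNPP; intro not_cvg.
  assert (far : forall K, exists k, (K <= k)%nat /\ e <= dist (u k) q).
  { intro K. apply NNPP; intro none. apply not_cvg. exists K. intros k hk.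
    destruct (Rlt_or_le (dist (u k) q) e) as [h | h]; [exact h |].
    exfalso; apply none; eauto. }
  destruct (functional_choice _ far) as [g hg].
  destruct (seq_compact X (fun k => u (g k))) as [s [l [incr cvg]]].
  assert (hlq : l = q).
  { apply (unique (fun k => g (s k))); [| exact cvg].
    intro k. pose proof (strict_incr_ge_id s incr k). pose proof (proj1 (hg (s k))). lia. }
  subst l. destruct (cvg e he) as [N hN].
  specialize (hN N (le_n N)). pose proof (proj2 (hg (s N))). lra.
Qed.

Lemma bw_add {X : dynsys} a b (x : X) : bw (a + b) x = bw a (bw b x).
Proof. induction a as [| a IH]; [reflexivity |]. unfold bw in *; simpl. now rewrite IH. Qed.

Lemma bw_fw {X : dynsys} n (x : X) : bw n (fw n x) = x.
Proof.
  induction n as [| n IH]; [reflexivity |].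
  replace (S n) with (n + 1)%nat at 1 by lia.
  rewrite bw_add. unfold bw at 2; simpl. rewrite hinv_hom. exact IH.
Qed.

Lemma bw_mul_fixed {X : dynsys} n (z : X) : bw n z = z -> forall k, bw (k * n) z = z.
Proof. intros fixed k; induction k as [| k IH]; [reflexivity |]. simpl. now rewrite bw_add, IH. Qed.

Lemma factor_map_bw {X Y : dynsys} (pi : X -> Y) : factor_map pi ->
  forall m x, pi (bw m x) = bw m (pi x).
Proof.
  intros [_ [_ equiv]] m; induction m as [| m IH]; intro x; [reflexivity |].
  change (pi (hinv (bw m x)) = hinv (bw m (pi x))). rewrite <- IH.
  rewrite <- (hinv_hom _ (pi (hinv (bw m x)))), <- equiv, hom_hinv. reflexivity.
Qed.

Lemma bw_continuous {X : dynsys} m : continuous_map (@bw X m).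
Proof.
  induction m as [| m IH]; intros x e he.
  - exists e; split; auto.
  - destruct (hinv_cont X (bw m x) e he) as [d1 [hd1 h1]].
    destruct (IH x d1 hd1) as [d [hd h]].
    exists d; split; auto. intros x' hx'. apply h1, h, hx'.
Qed.

Lemma bw_equicontinuous_upto {X : dynsys} (q : X) e r : e > 0 -> exists d, d > 0 /\
  forall z, dist q z < d -> forall r', (r' <= r)%nat -> dist (bw r' q) (bw r' z) < e.
Proof.
  intro he; induction r as [| r IH].
  - exists e; split; auto. intros z hz r' hr'. replace r' with 0%nat by lia. exact hz.
  - destruct IH as [d1 [hd1 h1]].
    destruct (bw_continuous (S r) q e he) as [d2 [hd2 h2]].
    exists (Rmin d1 d2); split; [apply Rmin_pos; auto |].
    intros z hz r' hr'. destruct (Nat.eq_dec r' (S r)) as [-> | hne].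
    + apply h2. pose proof (Rmin_r d1 d2); lra.
    + apply h1; [pose proof (Rmin_l d1 d2); lra | lia].
Qed.

Lemma unst_eq_sym {X : dynsys} (a b : X) : unst_eq a b -> unst_eq b a.
Proof.
  intros h e he. destruct (h e he) as [N hN]. exists N. intros m hm.
  rewrite dist_sym. now apply hN.
Qed.

Lemma unst_eq_trans {X : dynsys} (a b c : X) : unst_eq a b -> unst_eq b c -> unst_eq a c.
Proof.
  intros h1 h2 e he.
  destruct (h1 (e / 2)) as [N1 hN1]; [lra |]. destruct (h2 (e / 2)) as [N2 hN2]; [lra |].
  exists (N1 + N2)%nat. intros m hm.
  specialize (hN1 m ltac:(lia)); specialize (hN2 m ltac:(lia)).
  pose proof (dist_tri _ (bw m a) (bw m b) (bw m c)). lra.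
Qed.

Section PeriodicFibre.

Variables (X Y : dynsys) (pi : X -> Y).
Hypothesis pi_factor : factor_map pi.
Variables (p : Y) (n : nat).
Hypothesis n_pos : (n > 0)%nat.
Hypothesis p_fixed : bw n p = p.

Lemma limit_point_in_fibre (x : X) : unst_eq (pi x) p ->
  forall (s : nat -> nat) l, (forall k, (k <= s k)%nat) ->
    seq_cvg (fun k => bw (s k * n) x) l -> pi l = p.
Proof.
  intros xp s l s_ge cvg. apply dist_eq_of_lt_all. intros e he.
  destruct (proj1 pi_factor l (e / 2)) as [d [hd pi_near]]; [lra |].
  destruct (cvg d hd) as [N1 hN1].
  destruct (xp (e / 2)) as [N2 hN2]; [lra |].
  set (m := (s (N1 + N2)%nat * n)%nat).
  assert (near_l : dist (pi l) (pi (bw m x)) < e / 2).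
  { apply pi_near. rewrite dist_sym. apply hN1. lia. }
  assert (near_p : dist (bw m (pi x)) p < e / 2).
  { rewrite <- (bw_mul_fixed n p p_fixed (s (N1 + N2)%nat)). apply hN2.
    specialize (s_ge (N1 + N2)%nat). unfold m. nia. }
  rewrite factor_map_bw in near_l by exact pi_factor.
  pose proof (dist_tri _ (pi l) (bw m (pi x)) p). lra.
Qed.

Variable q : X.
Hypothesis fibre_p : forall x', pi x' = p <-> x' = q.

Lemma fibre_point_fixed : bw n q = q.
Proof.
  apply fibre_p. rewrite factor_map_bw by exact pi_factor.
  rewrite (proj2 (fibre_p q) eq_refl). exact p_fixed.
Qed.

Lemma unst_eq_of_stroboscopic_cvg (x : X) :
  seq_cvg (fun k => bw (k * n) x) q -> unst_eq x q.
Proof.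
  intros cvg e he. destruct (bw_equicontinuous_upto q e n he) as [d [hd near]].
  destruct (cvg d hd) as [K hK]. exists (K * n)%nat. intros m hm.
  rewrite (Nat.div_mod m n) by lia.
  pose proof (Nat.mod_upper_bound m n ltac:(lia)).
  assert (hK' : (K <= m / n)%nat).
  { apply Nat.div_le_lower_bound; lia. }
  replace (n * (m / n) + m mod n)%nat with (m mod n + (m / n) * n)%nat by lia.
  rewrite !bw_add, (bw_mul_fixed n q fibre_point_fixed).
  rewrite dist_sym. apply near; [rewrite dist_sym; now apply hK | lia].
Qed.

Lemma unst_eq_fibre_point (x : X) : unst_eq (pi x) p -> unst_eq x q.
Proof.
  intro xp. apply unst_eq_of_stroboscopic_cvg, seq_cvg_of_unique_limit_point.
  intros s l s_ge cvg. apply fibre_p. exact (limit_point_in_fibre x xp s l s_ge cvg).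
Qed.

End PeriodicFibre.

Theorem mainTheorem3 (X Y : dynsys) (pi : X -> Y) (P : list Y) :
  smale_space X ->
  finitely_presented Y ->
  factor_map pi ->
  almost_one_to_one pi ->
  u_resolving pi ->
  (forall p, In p P ->
     periodic p /\ synchronizing p /\ exists x, forall x', pi x' = p <-> x' = x) ->
  forall y : Y, (exists p, In p P /\ unst_eq y p) ->
  exists x : X, (forall x', pi x' = y <-> x' = x) /\
    (exists q : X, In (pi q) P /\ unst_eq x q).
Proof.
  intros _ _ pi_factor _ pi_resolving hP y [p [p_in yp]].
  destruct (hP p p_in) as [[n [n_pos p_per]] [_ [q fibre_p]]].
  assert (p_fixed : bw n p = p) by (rewrite <- p_per at 1; apply bw_fw).
  assert (preimage_unst : forall x, pi x = y -> unst_eq x q).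
  { intros x <-. exact (unst_eq_fibre_point X Y pi pi_factor p n n_pos p_fixed q fibre_p x yp). }
  destruct (proj1 (proj2 pi_factor) y) as [x hx].
  exists x. split.
  - intro x'; split; [| now intros ->].
    intro hx'. apply pi_resolving; [| congruence].
    apply (unst_eq_trans _ q); [| apply unst_eq_sym]; apply preimage_unst; assumption.
  - exists q. rewrite (proj2 (fibre_p q) eq_refl). split; [exact p_in |].
    exact (preimage_unst x hx).
Qed.
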